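(* For every $n\in\mathbb N$, the family of maps $\pi^n_X:\mathbb{T}_n(\mathbb{T}_{n+1}^-(X))\to\mathbb{T}_{n+1}(X)$, indexed by partial orders $X$, is a natural isomorphism $\pi^n:\mathbb{T}_n\circ\mathbb{T}_{n+1}^-\Rightarrow\mathbb{T}_{n+1}$; i.e. each $\pi^n_X$ is an isomorphism of partial orders and $\pi^n_Y\circ\mathbb{T}_n(\mathbb{T}_{n+1}^-(f))=\mathbb{T}_{n+1}(f)\circ\pi^n_X$ for every quasi embedding $f:X\to Y$.
   Context: A quasi embedding between partial orders is a function $f$ with $f(x)\leq f(y)\Rightarrow x\leq y$. For a partial order $X$, $M(X)$ is the set of finite multisets $[x_0,\dots,x_{m-1}]$ with elements from $X$, ordered by $[x_0,\dots,x_{m-1}]\leq_{M(X)}[y_0,\dots,y_{k-1}]$ iff there is an injection $g$ with $x_i\leq_X y_{g(i)}$ for all $i<m$. For $n\in\mathbb N$ and a partial order $X$, $\mathbb{T}_n(X)$ is generated by: $\overline x$ for each $x\in X$; $i\star\sigma$ for each $\sigma=[t_0,\dots,t_{m-1}]\in M(\mathbb{T}_n(X))$ and $i<n$. For $n>0$, $\mathbb{T}_n^-(X)=\{\overline x\mid x\in X\}\cup\{0\star\sigma\mid\sigma\in M(\mathbb{T}_n(X))\}\subseteq\mathbb{T}_n(X)$. The partial order $\leq_{\mathbb{T}_n(X)}$ is defined recursively: $\overline x\leq t$ iff either $t=\overline y$ with $x\leq_X y$, or $t=j\star[t_0,\dots,t_{m-1}]$ and $\overline x\leq t_l$ for some $l<m$;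 $i\star\sigma\leq t$ iff either $t=i\star\tau$ with $\sigma\leq_{M(\mathbb{T}_n(X))}\tau$, or $t=j\star[t_0,\dots,t_{m-1}]$ with $j\geq i$ and $i\star\sigma\leq t_l$ for some $l<m$; $\leq_{\mathbb{T}_n^-(X)}$ is its restriction. For a quasi embedding $f:X\to Y$, $\mathbb{T}_n(f)(\overline x)=\overline{f(x)}$, $\mathbb{T}_n(f)(i\star[t_0,\dots,t_{m-1}])=i\star[\mathbb{T}_n(f)(t_0),\dots,\mathbb{T}_n(f)(t_{m-1})]$, and $\mathbb{T}_n^-(f)$ is its restriction to $\mathbb{T}_n^-(X)$. Thus $\mathbb{T}_n(\mathbb{T}_{n+1}^-(X))$ consists of terms built from $\overline t$ ($t\in\mathbb{T}_{n+1}^-(X)$) with labels $i<n$. Define $\pi^n_X$ recursively by $\pi^n_X(\overline t)=t$ (using $\mathbb{T}_{n+1}^-(X)\subseteq\mathbb{T}_{n+1}(X)$) and $\pi^n_X(i\star[s_0,\dots,s_{m-1}])=(i+1)\star[\pi^n_X(s_0),\dots,\pi^n_X(s_{m-1})]$. *)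

From Stdlib Require Import List.
From mathcomp Require Import all_boot.
Set Implicit Arguments. Unset Strict Implicit. Unset Printing Implicit Defensive.

Record poset := Poset {
  pcar :> Type;
  ple : pcar -> pcar -> Prop;
  ple_refl : forall x, ple x x;
  ple_trans : forall x y z, ple x y -> ple y z -> ple x z;
  ple_anti : forall x y, ple x y -> ple y x -> x = y }.

Definition quasi_embedding (X Y : poset) (f : X -> Y) : Prop :=
  forall x y, ple (f x) (f y) -> ple x y.

(* Multisets are represented by lists; the order below is invariant
   under permutation, and the partial order T_n(X) is the quotient of this
   preorder by mutual comparability. *)
Inductive tm (n : nat) (A : Type) : Type :=
| Leaf : A -> tm n A
| Node : 'I_n -> list (tm n A) -> tm n A.
Arguments Leaf {n A}.
Arguments Node {n A}.

(* The clause
   tle_node_node is sigma <=_{M(T_n)} tau, spelled out: an injection g from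
   the positions of sigma to those of tau with sigma_k <= tau_(g k). *)
Inductive tle (n : nat) (A : Type) (leA : A -> A -> Prop) : tm n A -> tm n A -> Prop :=
| tle_leaf_leaf x y : leA x y -> tle leA (Leaf x) (Leaf y)
| tle_leaf_node x (j : 'I_n) ts t : In t ts -> tle leA (Leaf x) t -> tle leA (Leaf x) (Node j ts)
| tle_node_node (i : 'I_n) (s t : list (tm n A)) (g : nat -> nat) :
    (forall k k', k < size s -> k' < size s -> g k = g k' -> k = k') ->
    (forall k x, nth_error s k = Some x ->
       exists y, nth_error t (g k) = Some y /\ tle leA x y) ->
    tle leA (Node i s) (Node i t)
| tle_node_below (i : 'I_n) s (j : 'I_n) ts t : nat_of_ord i <= nat_of_ord j -> In t ts -> tle leA (Node i s) t ->
    tle leA (Node i s) (Node j ts).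

Fixpoint tmap (n : nat) (A B : Type) (f : A -> B) (t : tm n A) : tm n B :=
  match t with
  | Leaf x => Leaf (f x)
  | Node i ts => Node i (map (tmap f) ts)
  end.

Definition is_minus (n : nat) (A : Type) (t : tm n.+1 A) : bool :=
  match t with
  | Leaf _ => true
  | Node i _ => nat_of_ord i == 0
  end.

Definition Tminus (n : nat) (A : Type) := {t : tm n.+1 A | is_minus t}.

Definition Tminus_le (n : nat) (X : poset) (a b : Tminus n X) : Prop :=
  tle (@ple X) (proj1_sig a) (proj1_sig b).

Lemma is_minus_tmap (n : nat) (A B : Type) (f : A -> B) (t : tm n.+1 A) :
  is_minus t -> is_minus (tmap f t).
Proof. by case: t. Qed.

Definition Tminus_map (n : nat) (A B : Type) (f : A -> B) (a : Tminus n A) : Tminus n B :=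
  exist _ (tmap f (proj1_sig a)) (is_minus_tmap f (proj2_sig a)).

Fixpoint piT (n : nat) (A : Type) (s : tm n (Tminus n A)) : tm n.+1 A :=
  match s with
  | Leaf t => proj1_sig t
  | Node i ss => Node (lift ord0 i) (map (@piT n A) ss)
  end.

Definition tequiv (n : nat) (A : Type) (leA : A -> A -> Prop) (s t : tm n A) : Prop :=
  tle leA s t /\ tle leA t s.

(* g is an isomorphism between the partial orders obtained as quotients of the
   preorders (A, leA) and (B, leB): it reflects and preserves the order (hence
   is well defined and injective on the quotients) and is surjective up to
   equivalence. *)
Definition order_iso (A B : Type) (leA : A -> A -> Prop) (leB : B -> B -> Prop)
  (g : A -> B) : Prop :=
  (forall a a', leB (g a) (g a') <-> leA a a') /\
  (forall b, exists a, leB (g a) b /\ leB b (g a)).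

From Stdlib Require Import List.
From mathcomp Require Import all_boot.

(* Shifting every label by one does not change the comparison rules, and the
   leaves of T_n(T_{n+1}^-(X)) are exactly the leaves and 0-labelled nodes of
   T_{n+1}(X).  Such a term lies below a node labelled j+1 iff it lies below
   one of its children (the labels differ), and a node labelled i+1 never lies
   below it.  Hence pi^n reflects and preserves the order.  It is onto: the
   preimage of a term keeps the labels >= 1, shifted down, and turns the first
   leaf or 0-labelled node met on each branch into a leaf.  Naturality is a
   syntactic identity. *)

Set Implicit Arguments.
Unset Strict Implicit.
Unset Printing Implicit Defensive.

(* MathComp's [map] is a copy of [List.map], convertible to it but not
   syntactically equal, so the Stdlib lemmas about it are restated. *)
Lemma In_map (T U : Type) (h : T -> U) (l : seq T) (y : U) :
  In y (map h l) <-> exists2 x, h x = y & In x l.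
Proof.
by rewrite (in_map_iff h l y); split=> [[x [? ?]]|[x ? ?]]; exists x.
Qed.

Lemma nth_error_seq_map (T U : Type) (h : T -> U) (l : seq T) k :
  nth_error (map h l) k = option_map h (nth_error l k).
Proof. exact: nth_error_map. Qed.

Lemma eq_In_map (T U : Type) (h h' : T -> U) (l : seq T) :
  (forall x, In x l -> h x = h' x) -> map h l = map h' l.
Proof. exact: map_ext_in. Qed.

Lemma ex2_In_map (T U : Type) (h : T -> U) (P : U -> Prop) (Q : T -> Prop) l :
  (forall x, In x l -> P (h x) <-> Q x) ->
  (exists2 u, In u (map h l) & P u) <-> (exists2 x, In x l & Q x).
Proof.
move=> PQ; split=> [[_ /In_map [x <- xl] Phx]|[x xl Qx]].
  by exists x => //; apply/PQ.
by exists (h x); [apply/In_map; exists x | apply/PQ].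
Qed.

Definition mset_le (T : Type) (R : T -> T -> Prop) (s t : seq T) : Prop :=
  exists2 g : nat -> nat,
    (forall k k', k < size s -> k' < size s -> g k = g k' -> k = k') &
    (forall k x, nth_error s k = Some x ->
       exists y, nth_error t (g k) = Some y /\ R x y).

Lemma mset_le_map (T U : Type) (R : T -> T -> Prop) (R' : U -> U -> Prop)
    (h : T -> U) s t :
  (forall y, In y t -> forall x, R' (h x) (h y) <-> R x y) ->
  mset_le R' (map h s) (map h t) <-> mset_le R s t.
Proof.
move=> RR'; rewrite /mset_le size_map; split=> -[g g_inj le_g]; exists g => //.
- move=> k x sk; have := le_g k (h x).
  rewrite !nth_error_seq_map sk => /(_ erefl) [y []].
  case tk: (nth_error t (g k)) => [y'|] //= [<-].
  by exists y'; split; last exact/(RR' _ (nth_error_In _ _ tk)).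
- move=> k x; rewrite nth_error_seq_map.
  case sk: (nth_error s k) => [x'|] //= [<-].
  have [y [tk Rxy]] := le_g k x' sk.
  exists (h y); rewrite nth_error_seq_map tk; split => //.
  exact/(RR' _ (nth_error_In _ _ tk)).
Qed.

Section Terms.

Variables (n : nat) (A : Type).

Fixpoint tm_nested_ind (P : tm n A -> Prop) (P_leaf : forall x, P (Leaf x))
    (P_node : forall i ts, (forall t, In t ts -> P t) -> P (Node i ts))
    (t : tm n A) : P t :=
  match t with
  | Leaf x => P_leaf x
  | Node i ts => P_node i ts
      ((fix all_In (l : seq (tm n A)) : forall u, In u l -> P u :=
          match l with
          | [::] => fun u (ul : In u [::]) => False_ind _ ul
          | a :: l' => fun u (ul : In u (a :: l')) =>
              match ul with
              | or_introl au => eq_ind a P (tm_nested_ind P_leaf P_node a) u au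
              | or_intror ul' => all_In l' u ul'
              end
          end) ts)
  end.

Variable leA : A -> A -> Prop.

Lemma tle_refl : (forall x, leA x x) -> forall t : tm n A, tle leA t t.
Proof.
move=> leA_refl; elim/tm_nested_ind => [x|i ts IH]; first exact: tle_leaf_leaf.
apply: (@tle_node_node _ _ _ i ts ts id) => // k x tk.
by exists x; split; last exact/IH/(nth_error_In _ _ tk).
Qed.

Lemma tle_leaf_leafE x y : tle (n := n) leA (Leaf x) (Leaf y) <-> leA x y.
Proof. by split=> [le_xy|]; [inversion le_xy | exact: tle_leaf_leaf]. Qed.

Lemma not_tle_node_leaf i s y : ~ tle (n := n) leA (Node i s) (Leaf y).
Proof. by move=> le_sy; inversion le_sy. Qed.

Lemma tle_leaf_nodeE x (j : 'I_n) ts :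
  tle leA (Leaf x) (Node j ts) <-> exists2 t, In t ts & tle leA (Leaf x) t.
Proof.
split=> [le_xt|[t tts le_xt]]; last exact: tle_leaf_node tts le_xt.
by inversion le_xt; exists t.
Qed.

Lemma tle_node_nodeE (i j : 'I_n) s ts :
  tle leA (Node i s) (Node j ts) <->
  (i = j /\ mset_le (tle leA) s ts) \/
  (i <= j /\ exists2 t, In t ts & tle leA (Node i s) t).
Proof.
split=> [le_st|[[-> [g g_inj le_g]]|[le_ij [t tts le_st]]]].
- inversion le_st; first by left; split => //; exists g.
  by right; split => //; exists t.
- exact: tle_node_node g_inj le_g.
- exact: tle_node_below le_ij tts le_st.
Qed.

End Terms.

Section Shift.

Variables (n : nat) (A : Type) (leA : A -> A -> Prop).

Local Notation leM := (fun a b : Tminus n A => tle leA (sval a) (sval b)).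

Lemma not_tle_lift_minus i s (t : Tminus n A) :
  ~ tle leA (Node (lift ord0 i) s) (sval t).
Proof.
case: t => [[y|k ts] /= t_minus]; first exact: not_tle_node_leaf.
move/eqP: t_minus => k0; rewrite tle_node_nodeE => -[[ik _]|[]].
  by move: k0; rewrite -ik lift0.
by rewrite lift0 k0.
Qed.

Lemma tle_minus_liftE (t : Tminus n A) j ts :
  tle leA (sval t) (Node (lift ord0 j) ts) <->
  exists2 u, In u ts & tle leA (sval t) u.
Proof.
case: t => [[x|k s] /= t_minus]; first exact: tle_leaf_nodeE.
move/eqP: t_minus => k0; rewrite tle_node_nodeE.
split=> [[[kj _]|[_ //]]|below]; last by right; rewrite k0.
by move: k0; rewrite kj lift0.
Qed.

Lemma piT_le (a b : tm n (Tminus n A)) :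
  tle leA (piT a) (piT b) <-> tle leM a b.
Proof.
elim/tm_nested_ind: b a => [t'|j ss' IH] [t|i ss] /=.
- by rewrite tle_leaf_leafE.
- split=> le; exfalso.
    exact: not_tle_lift_minus le.
  exact: not_tle_node_leaf le.
- rewrite tle_minus_liftE tle_leaf_nodeE.
  by apply: ex2_In_map => u uss'; apply: (IH u uss' (Leaf t)).
- rewrite !tle_node_nodeE (mset_le_map _ IH) !lift0 ltnS.
  rewrite (ex2_In_map (fun u uss' => IH u uss' (Node i ss))).
  have lift_eq : lift ord0 i = lift ord0 j <-> i = j by split=> [/lift_inj|->].
  by rewrite lift_eq.
Qed.

Fixpoint unpiT (t : tm n.+1 A) : tm n (Tminus n A) :=
  match t with
  | Leaf x => Leaf (exist _ (Leaf x) erefl)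
  | Node i ts =>
      if unlift ord0 i is Some j then Node j (map unpiT ts)
      else Leaf (exist _ (Node ord0 ts) erefl)
  end.

Lemma unpiTK : cancel unpiT (@piT n A).
Proof.
elim/tm_nested_ind => [x|i ts IH] //=.
case: unliftP => [j ->|->] //=; congr Node.
by rewrite -map_comp -[RHS]map_id; apply: eq_In_map.
Qed.

Lemma piT_tmap (B : Type) (f : A -> B) (s : tm n (Tminus n A)) :
  piT (tmap (Tminus_map f) s) = tmap f (piT s).
Proof.
elim/tm_nested_ind: s => [t|i ss IH] //=.
by congr Node; rewrite -!map_comp; apply: eq_In_map => s /IH.
Qed.

End Shift.

Theorem proposition6p2 (n : nat) :
  (forall X : poset,
     order_iso (tle (n := n) (Tminus_le (n := n) (X := X)))
               (tle (n := n.+1) (@ple X)) (piT (n := n) (A := X))) /\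
  (forall (X Y : poset) (f : X -> Y), quasi_embedding f ->
     forall s : tm n (Tminus n X),
       tequiv (@ple Y) (piT (tmap (Tminus_map (n := n) f) s)) (tmap f (piT s))).
Proof.
split=> [X|X Y f _ s].
- split=> [a b|t]; first exact: piT_le.
  by exists (unpiT t); rewrite unpiTK; split; apply/tle_refl/ple_refl.
- (* naturality holds for any map [f], quasi embedding or not *)
  by rewrite piT_tmap; split; apply/tle_refl/ple_refl.
Qed.
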